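(* Assume $\mathfrak p=\mathfrak p_1\oplus\mathfrak p_2$ with $\mathfrak p_1,\mathfrak p_2$ $\mathrm{Ad}(K)$-irreducible and inequivalent, that $g_B$ is Einstein, $d_1=d_2$, $[111]=[222]$ and $[112]=[122]>0$. Then $g_B$ is a global maximum of $\mathrm{scal}|_{\mathcal M_1^G}$ if and only if $g_B$ is the unique $G$-invariant Einstein metric on $G/K$ up to scaling. Otherwise $g_B$ is a local minimum of $\mathrm{scal}|_{\mathcal M_1^G}$ and there exist exactly two other unit-volume $G$-invariant Einstein metrics, both local maxima of $\mathrm{scal}|_{\mathcal M_1^G}$, at least one of them a global maximum.
   Context: Let $G$ be a compact connected semisimple Lie group with Lie algebra $\mathfrak g$ and Killing form $B$, $K\subset G$ a closed subgroup with Lie algebra $\mathfrak k$, $\mathfrak p$ the $B$-orthogonal complement of $\mathfrak k$, and $g_B$ the standard metric on $G/K$, given on $\mathfrak p$ by $\langle\cdot,\cdot\rangle=-B|_{\mathfrak p\times\mathfrak p}$. For a $\langle\cdot,\cdot\rangle$-orthogonal decomposition $\mathfrak p=\mathfrak p_1\oplus\dots\oplus\mathfrak p_r$ into $\mathrm{Ad}(K)$-invariant subspaces with $d_i=\dim\mathfrak p_i$, the structural constants are $[ijk]=\sum_{\alpha,\beta,\gamma}\langle[X^i_\alpha,X^j_\beta],X^k_\gamma\rangle^2$, where $\{X^i_\alpha\}$ is an orthonormal basis of $\mathfrak p_i$; they are symmetric in $i,j,k$. When $\mathfrak p=\mathfrak p_1\oplus\mathfrak p_2$ with inequivalent irreducible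 summands, every $G$-invariant metric is of the form $x_1\langle\cdot,\cdot\rangle|_{\mathfrak p_1}+x_2\langle\cdot,\cdot\rangle|_{\mathfrak p_2}$ with $x_1,x_2>0$. $\mathcal M_1^G$ denotes the set of unit-volume $G$-invariant metrics (volume normalized as that of $g_B$) and $\mathrm{scal}$ the scalar curvature function on it; its critical points are exactly the $G$-invariant Einstein metrics. *)

From Stdlib Require Import Reals.
Open Scope R_scope.

(* Index set {1,2} of the two Ad(K)-irreducible summands p_1, p_2. *)
Inductive idx := i1 | i2.

Definition sum_idx (f : idx -> R) : R := f i1 + f i2.

(* A G-invariant metric x_1 <,>|p1 + x_2 <,>|p2 is encoded by x : idx -> R
   with x i > 0 (every invariant metric has this form since p1, p2 are
   irreducible and inequivalent). *)
Definition metric_pos (x : idx -> R) : Prop := forall i, 0 < x i.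

Definition meq (x y : idx -> R) : Prop := x i1 = y i1 /\ x i2 = y i2.

Definition gB : idx -> R := fun _ => 1.

Definition sc_symmetric (sc : idx -> idx -> idx -> R) : Prop :=
  forall i j k, sc i j k = sc j i k /\ sc i j k = sc i k j.

(* Ricci eigenvalues (Park--Sakane / Wang--Ziller formula, with b_k = 1 since
   <,> = -B):  Ric = r_k * x_k <,> on p_k, where
   r_k = 1/(2 x_k) + 1/(4 d_k) sum_{i,j} [ijk] x_k/(x_i x_j)
                   - 1/(2 d_k) sum_{i,j} [kij] x_j/(x_k x_i). *)
Definition ricci (d : idx -> nat) (sc : idx -> idx -> idx -> R)
  (x : idx -> R) (k : idx) : R :=
  / (2 * x k)
  + / (4 * INR (d k)) *
      sum_idx (fun i => sum_idx (fun j => sc i j k * x k / (x i * x j)))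
  - / (2 * INR (d k)) *
      sum_idx (fun i => sum_idx (fun j => sc k i j * x j / (x k * x i))).

Definition scal (d : idx -> nat) (sc : idx -> idx -> idx -> R)
  (x : idx -> R) : R :=
  sum_idx (fun k => INR (d k) * ricci d sc x k).

(* x is a G-invariant Einstein metric: Ric = lambda g, i.e. r_1 = r_2 *)
Definition einstein (d : idx -> nat) (sc : idx -> idx -> idx -> R)
  (x : idx -> R) : Prop :=
  metric_pos x /\ ricci d sc x i1 = ricci d sc x i2.

Definition unit_volume (d : idx -> nat) (x : idx -> R) : Prop :=
  metric_pos x /\ x i1 ^ d i1 * x i2 ^ d i2 = 1.

Definition mdist (x y : idx -> R) : R :=
  Rmax (Rabs (x i1 - y i1)) (Rabs (x i2 - y i2)).

Definition local_max_M1 (d : idx -> nat) (f : (idx -> R) -> R)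
  (x : idx -> R) : Prop :=
  unit_volume d x /\
  exists eps, 0 < eps /\
    forall y, unit_volume d y -> mdist x y < eps -> f y <= f x.

Definition local_min_M1 (d : idx -> nat) (f : (idx -> R) -> R)
  (x : idx -> R) : Prop :=
  unit_volume d x /\
  exists eps, 0 < eps /\
    forall y, unit_volume d y -> mdist x y < eps -> f x <= f y.

Definition global_max_M1 (d : idx -> nat) (f : (idx -> R) -> R)
  (x : idx -> R) : Prop :=
  unit_volume d x /\ forall y, unit_volume d y -> f y <= f x.

Definition unique_einstein_up_to_scaling (d : idx -> nat)
  (sc : idx -> idx -> idx -> R) (x : idx -> R) : Prop :=
  einstein d sc x /\
  forall y, einstein d sc y -> exists s, 0 < s /\ forall i, y i = s * x i.

From Stdlib Require Import Reals Lra Psatz.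
Open Scope R_scope.

(* When d_1 = d_2 and the structure constants are invariant under swapping p_1
   and p_2, a unit-volume metric satisfies x_1 x_2 = 1 and its scalar curvature
   depends only on u = x_1 + x_2 >= 2: it is the cubic c u - [112] u^3 / 4 with
   c = d_1/2 - [111]/4 + [112]/4.  The Einstein metrics other than g_B are the
   unit-volume metrics at the critical point u0 = sqrt (4c / (3 [112])) of this
   cubic.  If c <= 3 [112] the cubic decreases on [2, oo), so g_B (u = 2) is the
   global maximum and there is no other Einstein metric.  Otherwise u0 > 2 is the
   maximum of the cubic on [0, oo), reached by the two metrics (p, 1/p) and
   (1/p, p) with p + 1/p = u0, and the cubic increases on [2, u0], so g_B is a
   local minimum which is not a global maximum. *)

Definition all_equal (i j k : idx) : bool :=
  match i, j, k with
  | i1, i1, i1 | i2, i2, i2 => true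
  | _, _, _ => false
  end.

Record symmetric_setting (d : idx -> nat) (sc : idx -> idx -> idx -> R)
    (a b : R) : Prop := {
  dim_pos : (0 < d i1)%nat;
  dim_eq : d i2 = d i1;
  sc_explicit : forall i j k, sc i j k = if all_equal i j k then a else b;
  sc_mixed_pos : 0 < b }.
Arguments dim_pos {d sc a b}.
Arguments dim_eq {d sc a b}.
Arguments sc_explicit {d sc a b}.
Arguments sc_mixed_pos {d sc a b}.

Lemma symmetric_setting_intro (d : idx -> nat) (sc : idx -> idx -> idx -> R) :
  (0 < d i1)%nat -> d i1 = d i2 -> sc_symmetric sc ->
  sc i1 i1 i1 = sc i2 i2 i2 -> sc i1 i1 i2 = sc i1 i2 i2 -> 0 < sc i1 i1 i2 ->
  symmetric_setting d sc (sc i1 i1 i1) (sc i1 i1 i2).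
Proof.
  intros hd hd12 hsym h111 h112 hb.
  split; auto.
  destruct (hsym i1 i1 i2), (hsym i1 i2 i1), (hsym i1 i2 i2), (hsym i2 i1 i2).
  intros [] [] []; simpl; congruence.
Qed.

Definition recip_metric (t : R) : idx -> R :=
  fun i => match i with i1 => t | i2 => / t end.

Definition scal_coeff (d : idx -> nat) (a b : R) : R :=
  INR (d i1) / 2 - a / 4 + b / 4.

Definition scal_profile (c b u : R) : R := c * u - b / 4 * u ^ 3.

Lemma unit_volume_gB (d : idx -> nat) : unit_volume d gB.
Proof.
  split.
  - intros i; unfold gB; lra.
  - unfold gB; rewrite !pow1; ring.
Qed.

Lemma unit_volume_iff (d : idx -> nat) (x : idx -> R) :
  (0 < d i1)%nat -> d i2 = d i1 ->
  unit_volume d x <-> metric_pos x /\ x i1 * x i2 = 1.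
Proof.
  intros hd hN; unfold unit_volume; rewrite hN, <- Rpow_mult_distr.
  split; intros [hx hv]; split; auto.
  - assert (0 < x i1 * x i2) by (apply Rmult_lt_0_compat; apply hx).
    destruct (pow_R1 _ _ hv) as [h | h]; [| lia].
    rewrite Rabs_pos_eq in h; lra.
  - rewrite hv; apply pow1.
Qed.

Lemma unit_volume_recip_metric (d : idx -> nat) (t : R) :
  (0 < d i1)%nat -> d i2 = d i1 -> 0 < t -> unit_volume d (recip_metric t).
Proof.
  intros hd hN ht; apply unit_volume_iff; auto; split.
  - intros []; simpl; [| apply Rinv_0_lt_compat]; exact ht.
  - simpl; field; lra.
Qed.

Lemma recip_metric_not_gB (t : R) : t <> 1 -> ~ meq (recip_metric t) gB.
Proof. intros ht [h _]; exact (ht h). Qed.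

Lemma local_max_of_global_max (d : idx -> nat) (f : (idx -> R) -> R) (x : idx -> R) :
  global_max_M1 d f x -> local_max_M1 d f x.
Proof.
  intros [hx hmax]; split; auto.
  exists 1; split; [lra |]; auto.
Qed.

Lemma sum_ge_2_of_mul_1 (s t : R) : 0 < s -> 0 < t -> s * t = 1 -> 2 <= s + t.
Proof. intros hs ht hst; pose proof (pow2_ge_0 (s - t)); nra. Qed.

(* f(2) - f(u) = (u - 2) (b (u^2 + 2u + 4) / 4 - c) *)
Lemma scal_profile_le_at_2 (c b u : R) :
  0 <= b -> c <= 3 * b -> 2 <= u -> scal_profile c b u <= scal_profile c b 2.
Proof.
  intros hb hc hu; unfold scal_profile.
  assert (0 <= b * (u ^ 2 + 2 * u + 4 - 12)) by (apply Rmult_le_pos; nra).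
  assert (0 <= (u - 2) * (b / 4 * (u ^ 2 + 2 * u + 4) - c)); [| nra].
  apply Rmult_le_pos; lra.
Qed.

Lemma scal_profile_at_crit_sub (c b u u0 : R) :
  3 * b * u0 ^ 2 = 4 * c ->
  scal_profile c b u0 - scal_profile c b u = b / 4 * (u0 - u) ^ 2 * (2 * u0 + u).
Proof.
  intros hc; unfold scal_profile.
  replace c with (3 * b * u0 ^ 2 / 4) by lra; field.
Qed.

Lemma scal_profile_le_at_crit (c b u u0 : R) :
  0 <= b -> 3 * b * u0 ^ 2 = 4 * c -> 0 <= u -> 0 <= u0 ->
  scal_profile c b u <= scal_profile c b u0.
Proof.
  intros hb hc hu hu0.
  pose proof (scal_profile_at_crit_sub c b u u0 hc).
  assert (0 <= b / 4 * (u0 - u) ^ 2 * (2 * u0 + u)); [| lra].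
  apply Rmult_le_pos; [apply Rmult_le_pos; [lra | apply pow2_ge_0] | lra].
Qed.

Lemma scal_profile_lt_at_crit (c b u u0 : R) :
  0 < b -> 3 * b * u0 ^ 2 = 4 * c -> 0 <= u < u0 ->
  scal_profile c b u < scal_profile c b u0.
Proof.
  intros hb hc hu.
  pose proof (scal_profile_at_crit_sub c b u u0 hc).
  assert (0 < b / 4 * (u0 - u) ^ 2 * (2 * u0 + u)); [| lra].
  apply Rmult_lt_0_compat; [apply Rmult_lt_0_compat | lra]; [lra | nra].
Qed.

(* f(u) - f(2) = (u - 2) (c - b (u^2 + 2u + 4) / 4) *)
Lemma scal_profile_ge_at_2 (c b u u0 : R) :
  0 <= b -> 3 * b * u0 ^ 2 = 4 * c -> 2 <= u <= u0 ->
  scal_profile c b 2 <= scal_profile c b u.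
Proof.
  intros hb hc hu; unfold scal_profile.
  assert (0 <= b * (3 * u0 ^ 2 - (u ^ 2 + 2 * u + 4))) by (apply Rmult_le_pos; nra).
  assert (0 <= (u - 2) * (c - b / 4 * (u ^ 2 + 2 * u + 4))); [| nra].
  apply Rmult_le_pos; lra.
Qed.

Lemma inv_lt_1 (p : R) : 1 < p -> / p < 1.
Proof. intros hp; rewrite <- Rinv_1; apply Rinv_1_lt_contravar; lra. Qed.

Lemma add_inv_gt_2 (p : R) : 1 < p -> 2 < p + / p.
Proof.
  intros hp; pose proof (inv_lt_1 p hp).
  assert (p * / p = 1) by (field; lra).
  nra.
Qed.

Lemma exists_crit_recip_pair (c b : R) :
  0 < b -> 3 * b < c -> exists p, 1 < p /\ 3 * b * (p + / p) ^ 2 = 4 * c.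
Proof.
  intros hb hc.
  set (u0 := sqrt (4 * c / (3 * b))).
  assert (hu0 : u0 * u0 = 4 * c / (3 * b)).
  { apply sqrt_sqrt; apply Rlt_le, Rdiv_lt_0_compat; lra. }
  assert (hu0_gt_2 : 2 < u0).
  { assert (4 < 4 * c / (3 * b)).
    { apply (Rmult_lt_reg_r (3 * b)); [lra |]; field_simplify; lra. }
    assert (0 <= u0) by apply sqrt_pos; nra. }
  set (D := sqrt (u0 * u0 - 4)).
  assert (hD : D * D = u0 * u0 - 4) by (apply sqrt_sqrt; nra).
  assert (hD_pos : 0 < D) by (apply sqrt_lt_R0; nra).
  exists ((u0 + D) / 2); split; [lra |].
  assert (hinv : / ((u0 + D) / 2) = (u0 - D) / 2).
  { apply Rmult_eq_reg_l with ((u0 + D) / 2); [| lra].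
    rewrite Rinv_r by lra; nra. }
  rewrite hinv; replace ((u0 + D) / 2 + (u0 - D) / 2) with u0 by field.
  simpl; rewrite Rmult_1_r, hu0; field; lra.
Qed.

Section SymmetricSetting.
Context {d : idx -> nat} {sc : idx -> idx -> idx -> R} {a b : R}.
Hypothesis S : symmetric_setting d sc a b.

Local Notation c := (scal_coeff d a b).

Lemma dim_INR_pos : 0 < INR (d i1).
Proof. apply lt_0_INR, (dim_pos S). Qed.

Lemma ricci_sub (x : idx -> R) : metric_pos x ->
  (ricci d sc x i1 - ricci d sc x i2) * (4 * INR (d i1) * x i1 ^ 2 * x i2 ^ 2) =
  (x i1 - x i2) * (3 * b * (x i1 ^ 2 + x i2 ^ 2) + (6 * b - 4 * c) * (x i1 * x i2)).
Proof.
  intros hx; pose proof (hx i1); pose proof (hx i2); pose proof dim_INR_pos.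
  unfold ricci, sum_idx, scal_coeff; rewrite !(sc_explicit S); simpl.
  rewrite (dim_eq S); field; lra.
Qed.

Lemma einstein_iff (x : idx -> R) : metric_pos x ->
  einstein d sc x <->
  x i1 = x i2 \/ 3 * b * (x i1 ^ 2 + x i2 ^ 2) + (6 * b - 4 * c) * (x i1 * x i2) = 0.
Proof.
  intros hx; pose proof (hx i1); pose proof (hx i2); pose proof dim_INR_pos.
  pose proof (ricci_sub x hx) as hsub.
  assert (hden : 0 < 4 * INR (d i1) * x i1 ^ 2 * x i2 ^ 2).
  { repeat apply Rmult_lt_0_compat; try apply pow_lt; lra. }
  unfold einstein; split.
  - intros [_ hE]; rewrite hE, Rminus_diag, Rmult_0_l in hsub.
    destruct (Rmult_integral _ _ (eq_sym hsub)); [left | right]; lra.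
  - intros hcase; split; auto.
    assert (hprod : (ricci d sc x i1 - ricci d sc x i2) *
                    (4 * INR (d i1) * x i1 ^ 2 * x i2 ^ 2) = 0).
    { rewrite hsub; destruct hcase as [h | h]; rewrite h; ring. }
    destruct (Rmult_integral _ _ hprod); lra.
Qed.

Lemma scal_unit_volume (x : idx -> R) :
  unit_volume d x -> scal d sc x = scal_profile c b (x i1 + x i2).
Proof.
  intros hx.
  destruct (proj1 (unit_volume_iff d x (dim_pos S) (dim_eq S)) hx) as [hpos hprod].
  pose proof (hpos i1); pose proof (hpos i2); pose proof dim_INR_pos.
  assert (hx2 : x i2 = / x i1) by (apply (Rmult_eq_reg_l (x i1)); [field_simplify |]; lra).
  unfold scal, ricci, sum_idx, scal_profile, scal_coeff; rewrite !(sc_explicit S); simpl.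
  rewrite (dim_eq S), hx2; field; lra.
Qed.

(* 3 b u^2 = 4 c says that u is a critical point of scal_profile c b. *)
Lemma einstein_unit_volume_iff (x : idx -> R) : unit_volume d x ->
  einstein d sc x <-> meq x gB \/ 3 * b * (x i1 + x i2) ^ 2 = 4 * c.
Proof.
  intros hx.
  destruct (proj1 (unit_volume_iff d x (dim_pos S) (dim_eq S)) hx) as [hpos hprod].
  pose proof (hpos i1); pose proof (hpos i2).
  assert (hsq : (x i1 + x i2) ^ 2 = x i1 ^ 2 + x i2 ^ 2 + 2).
  { replace 2 with (2 * (x i1 * x i2)) by (rewrite hprod; ring); ring. }
  rewrite (einstein_iff x hpos), hsq, hprod; unfold meq, gB; split; intros [h | h].
  - rewrite <- h in hprod.
    assert (hroot : (x i1 - 1) * (x i1 + 1) = 0) by lra.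
    destruct (Rmult_integral _ _ hroot); [left | ]; lra.
  - right; lra.
  - left; lra.
  - right; lra.
Qed.

Lemma gB_einstein : einstein d sc gB.
Proof. apply einstein_iff; [intros i; unfold gB; lra | left; reflexivity]. Qed.

Lemma gB_global_max_of_le : c <= 3 * b -> global_max_M1 d (scal d sc) gB.
Proof.
  intros hc; split; [apply unit_volume_gB |]; intros w hw.
  rewrite (scal_unit_volume w hw), (scal_unit_volume gB (unit_volume_gB d)); unfold gB.
  destruct (proj1 (unit_volume_iff d w (dim_pos S) (dim_eq S)) hw) as [hpos hprod].
  replace (1 + 1) with 2 by ring.
  apply scal_profile_le_at_2; [apply Rlt_le, (sc_mixed_pos S) | exact hc |].
  apply sum_ge_2_of_mul_1; auto.
Qed.

Lemma gB_unique_einstein_of_le : c <= 3 * b -> unique_einstein_up_to_scaling d sc gB.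
Proof.
  intros hc; split; [exact gB_einstein |]; intros y hy.
  pose proof (proj1 hy) as hpos; pose proof (hpos i1) as hy1; pose proof (hpos i2).
  pose proof (sc_mixed_pos S).
  assert (hy12 : y i1 = y i2).
  { destruct (proj1 (einstein_iff y hpos) hy) as [h | h]; [exact h |].
    assert (0 <= (12 * b - 4 * c) * (y i1 * y i2)) by (apply Rmult_le_pos; nra).
    assert (0 <= b * (y i1 - y i2) ^ 2) by (apply Rmult_le_pos; [lra | apply pow2_ge_0]).
    assert (hzero : b * (y i1 - y i2) ^ 2 = 0) by nra.
    destruct (Rmult_integral _ _ hzero) as [hb0 | hsq]; [lra |].
    destruct (Req_dec (y i1) (y i2)) as [| hne]; [assumption |].
    apply Rminus_eq_contra, (pow_nonzero _ 2) in hne; contradiction. }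
  exists (y i1); split; [exact hy1 |].
  intros []; unfold gB; lra.
Qed.

Section Bifurcation.
Context {p : R}.
Hypotheses (hp : 1 < p) (hcp : 3 * b * (p + / p) ^ 2 = 4 * c).

Lemma recip_einstein (t : R) :
  0 < t -> t + / t = p + / p -> einstein d sc (recip_metric t).
Proof.
  intros ht htp.
  pose proof (unit_volume_recip_metric d t (dim_pos S) (dim_eq S) ht) as huv.
  apply (einstein_unit_volume_iff _ huv); right; simpl; rewrite htp; exact hcp.
Qed.

Lemma recip_global_max (t : R) :
  0 < t -> t + / t = p + / p -> global_max_M1 d (scal d sc) (recip_metric t).
Proof.
  intros ht htp.
  pose proof (unit_volume_recip_metric d t (dim_pos S) (dim_eq S) ht) as huv.
  split; [exact huv |]; intros w hw.
  rewrite (scal_unit_volume w hw), (scal_unit_volume _ huv); simpl; rewrite htp.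
  destruct (proj1 (unit_volume_iff d w (dim_pos S) (dim_eq S)) hw) as [hpos _].
  pose proof (hpos i1); pose proof (hpos i2); pose proof (add_inv_gt_2 p hp).
  apply scal_profile_le_at_crit; [apply Rlt_le, (sc_mixed_pos S) | exact hcp | lra | lra].
Qed.

Lemma gB_not_global_max : ~ global_max_M1 d (scal d sc) gB.
Proof.
  intros [hgB hmax].
  assert (hp0 : 0 < p) by lra.
  specialize (hmax _ (unit_volume_recip_metric d p (dim_pos S) (dim_eq S) hp0)).
  rewrite (scal_unit_volume _ (unit_volume_recip_metric d p (dim_pos S) (dim_eq S) hp0)),
    (scal_unit_volume _ hgB) in hmax; simpl in hmax; unfold gB in hmax.
  pose proof (add_inv_gt_2 p hp).
  assert (scal_profile c b (1 + 1) < scal_profile c b (p + / p)); [| lra].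
  apply scal_profile_lt_at_crit; [exact (sc_mixed_pos S) | exact hcp | lra].
Qed.

Lemma gB_not_unique_einstein : ~ unique_einstein_up_to_scaling d sc gB.
Proof.
  intros [_ huniq].
  destruct (huniq _ (recip_einstein p ltac:(lra) eq_refl)) as [s [_ hs]].
  pose proof (hs i1); pose proof (hs i2); pose proof (inv_lt_1 p hp).
  simpl in *; unfold gB in *; lra.
Qed.

Lemma gB_local_min : local_min_M1 d (scal d sc) gB.
Proof.
  split; [apply unit_volume_gB |].
  pose proof (add_inv_gt_2 p hp).
  exists ((p + / p - 2) / 2); split; [lra |]; intros w hw hdist.
  rewrite (scal_unit_volume w hw), (scal_unit_volume gB (unit_volume_gB d)); unfold gB.
  destruct (proj1 (unit_volume_iff d w (dim_pos S) (dim_eq S)) hw) as [hpos hprod].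
  unfold mdist, gB in hdist.
  apply Rmax_Rlt in hdist as [h1 h2].
  apply Rabs_def2 in h1; apply Rabs_def2 in h2.
  replace (1 + 1) with 2 by ring.
  apply (scal_profile_ge_at_2 c b _ (p + / p)); [apply Rlt_le, (sc_mixed_pos S) | exact hcp |].
  split; [apply sum_ge_2_of_mul_1; auto | lra].
Qed.

Lemma einstein_unit_volume_cases (w : idx -> R) :
  unit_volume d w -> einstein d sc w ->
  meq w gB \/ meq w (recip_metric p) \/ meq w (recip_metric (/ p)).
Proof.
  intros hw hwE.
  destruct (proj1 (unit_volume_iff d w (dim_pos S) (dim_eq S)) hw) as [hpos hprod].
  pose proof (hpos i1); pose proof (hpos i2); pose proof (add_inv_gt_2 p hp).
  pose proof (sc_mixed_pos S).
  destruct (proj1 (einstein_unit_volume_iff w hw) hwE) as [| hcrit]; [left; assumption | right].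
  assert (hsum : w i1 + w i2 = p + / p).
  { assert (hsq : (w i1 + w i2 - (p + / p)) * (w i1 + w i2 + (p + / p)) = 0).
    { apply (Rmult_eq_reg_l (3 * b)); [| lra]; lra. }
    destruct (Rmult_integral _ _ hsq); lra. }
  assert (hroots : (w i1 - p) * (w i1 - / p) = 0).
  { replace ((w i1 - p) * (w i1 - / p)) with
      (w i1 * (w i1 - (p + / p)) + p * / p) by ring.
    rewrite <- hsum, Rinv_r by lra; lra. }
  unfold meq; simpl; rewrite Rinv_inv.
  destruct (Rmult_integral _ _ hroots); [left | right]; lra.
Qed.

End Bifurcation.
End SymmetricSetting.

Theorem lemma6p2 (d : idx -> nat) (sc : idx -> idx -> idx -> R)
  (hd : forall i, (0 < d i)%nat)
  (hsym : sc_symmetric sc)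
  (hnn : forall i j k, 0 <= sc i j k)
  (hE : einstein d sc gB)
  (hd12 : d i1 = d i2)
  (h111 : sc i1 i1 i1 = sc i2 i2 i2)
  (h112 : sc i1 i1 i2 = sc i1 i2 i2)
  (hpos : 0 < sc i1 i1 i2) :
  (global_max_M1 d (scal d sc) gB <-> unique_einstein_up_to_scaling d sc gB) /\
  (~ global_max_M1 d (scal d sc) gB ->
     local_min_M1 d (scal d sc) gB /\
     exists y z : idx -> R,
       unit_volume d y /\ einstein d sc y /\
       unit_volume d z /\ einstein d sc z /\
       ~ meq y gB /\ ~ meq z gB /\ ~ meq y z /\
       (forall w, unit_volume d w -> einstein d sc w ->
          meq w gB \/ meq w y \/ meq w z) /\
       local_max_M1 d (scal d sc) y /\ local_max_M1 d (scal d sc) z /\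
       (global_max_M1 d (scal d sc) y \/ global_max_M1 d (scal d sc) z)).
Proof.
  pose proof (symmetric_setting_intro d sc (hd i1) hd12 hsym h111 h112 hpos) as S.
  destruct (Rle_or_lt (scal_coeff d (sc i1 i1 i1) (sc i1 i1 i2)) (3 * sc i1 i1 i2))
    as [hc | hc].
  - pose proof (gB_global_max_of_le S hc); pose proof (gB_unique_einstein_of_le S hc).
    tauto.
  - destruct (exists_crit_recip_pair _ _ hpos hc) as [p [hp hcp]].
    pose proof (gB_not_global_max S hp hcp); pose proof (gB_not_unique_einstein S hp hcp).
    split; [tauto | intros _].
    pose proof (inv_lt_1 p hp) as hinv.
    assert (hp0 : 0 < p) by lra.
    assert (hinv0 : 0 < / p) by (apply Rinv_0_lt_compat; lra).
    assert (hswap : / p + / / p = p + / p) by (rewrite Rinv_inv; ring).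
    pose proof (recip_global_max S hp hcp p hp0 eq_refl) as hmax_y.
    pose proof (recip_global_max S hp hcp (/ p) hinv0 hswap) as hmax_z.
    split; [exact (gB_local_min S hp hcp) |].
    exists (recip_metric p), (recip_metric (/ p)).
    split; [exact (proj1 hmax_y) |].
    split; [exact (recip_einstein S hcp p hp0 eq_refl) |].
    split; [exact (proj1 hmax_z) |].
    split; [exact (recip_einstein S hcp (/ p) hinv0 hswap) |].
    split; [apply recip_metric_not_gB; lra |].
    split; [apply recip_metric_not_gB; lra |].
    split; [intros [h _]; simpl in h; lra |].
    split; [exact (einstein_unit_volume_cases S hp hcp) |].
    split; [exact (local_max_of_global_max _ _ _ hmax_y) |].
    split; [exact (local_max_of_global_max _ _ _ hmax_z) |].
    left; exact hmax_y.
Qed.
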